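(* Let $T$ be a complete theory. If $\langle\varphi(x,y),\langle a_\eta\rangle_{\eta\in{}^{\omega>}2}\rangle$ is an antichain tree, then $\varphi(x,y)$ has TP$_2$.
   Context: Work in a monster model of $T$; ${}^{\omega>}2$ is the binary tree with initial-segment order $\trianglelefteq$. A subset $X\subseteq{}^{\omega>}2$ is an antichain if its elements are pairwise $\trianglelefteq$-incomparable. $\langle\varphi(x,y),\langle a_\eta\rangle\rangle$ is an antichain tree if for every $X\subseteq{}^{\omega>}2$, $\{\varphi(x,a_\eta):\eta\in X\}$ is consistent iff $X$ is an antichain. $\varphi(x,y)$ has TP$_2$ if there is an array $\langle b_{i,j}\rangle_{i,j<\omega}$ such that $\{\varphi(x,b_{i,j}):j<\omega\}$ is 2-inconsistent for each $i<\omega$ and $\{\varphi(x,b_{i,f(i)}):i<\omega\}$ is consistent for every $f:\omega\to\omega$. *)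

From Stdlib Require List.
From mathcomp Require Import all_boot.
Set Implicit Arguments. Unset Strict Implicit. Unset Printing Implicit Defensive.

Record signature := Signature {
  fsym : Type; farity : fsym -> nat;
  rsym : Type; rarity : rsym -> nat }.

Inductive term (L : signature) : Type :=
| tvar : nat -> term L
| tapp : forall f : fsym L, ('I_(farity f) -> term L) -> term L.

(* de Bruijn formulas: [fex p] binds variable 0 in [p]. *)
Inductive formula (L : signature) : Type :=
| feq : term L -> term L -> formula L
| frel : forall r : rsym L, ('I_(rarity r) -> term L) -> formula L
| fneg : formula L -> formula L
| fand : formula L -> formula L -> formula L
| fex : formula L -> formula L.

Record structure (L : signature) := Structure {
  carrier :> Type;
  an_element : carrier;
  fun_interp : forall f : fsym L, ('I_(farity f) -> carrier) -> carrier;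
  rel_interp : forall r : rsym L, ('I_(rarity r) -> carrier) -> Prop }.

Section Semantics.
Variables (L : signature) (M : structure L).

Fixpoint teval (e : nat -> M) (t : term L) : M :=
  match t with
  | tvar i => e i
  | tapp f ts => @fun_interp L M f (fun k => teval e (ts k))
  end.

Definition scons (d : M) (e : nat -> M) : nat -> M :=
  fun i => if i is j.+1 then e j else d.

Fixpoint holds (e : nat -> M) (p : formula L) : Prop :=
  match p with
  | feq t u => teval e t = teval e u
  | frel r ts => @rel_interp L M r (fun k => teval e (ts k))
  | fneg q => ~ holds e q
  | fand q r => holds e q /\ holds e r
  | fex q => exists d : M, holds (scons d e) q
  end.
End Semantics.

Fixpoint term_vars_below (L : signature) (k : nat) (t : term L) : Prop :=
  match t with
  | tvar i => i < k
  | tapp f ts => forall j, term_vars_below k (ts j)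
  end.

Fixpoint formula_vars_below (L : signature) (k : nat) (p : formula L) : Prop :=
  match p with
  | feq t u => term_vars_below k t /\ term_vars_below k u
  | frel r ts => forall j, term_vars_below k (ts j)
  | fneg q => formula_vars_below k q
  | fand q r => formula_vars_below k q /\ formula_vars_below k r
  | fex q => formula_vars_below k.+1 q
  end.

(* A formula phi(x,y) with |x| = n, |y| = m: free variables among 0..n+m-1,
   variables 0..n-1 are x and n..n+m-1 are y. *)
Definition pair_env (L : signature) (M : structure L) (n m : nat)
  (a : 'I_n -> M) (b : 'I_m -> M) : nat -> M :=
  fun i => if @insub _ (fun i => i < n) 'I_n i is Some k then a k
           else if @insub _ (fun i => i < m) 'I_m (i - n) is Some k then b k
           else an_element M.

Definition sat (L : signature) (M : structure L) (n m : nat) (phi : formula L)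
  (a : 'I_n -> M) (b : 'I_m -> M) : Prop :=
  holds (pair_env a b) phi.

(* The partial type { phi(x, b) : b in S } (parameters from M) is consistent,
   i.e. consistent with the elementary diagram of M, i.e. finitely satisfiable in M. *)
Definition consistent (L : signature) (M : structure L) (n m : nat)
  (phi : formula L) (S : ('I_m -> M) -> Prop) : Prop :=
  forall s : list ('I_m -> M), (forall b, Stdlib.Lists.List.In b s -> S b) ->
    exists a : 'I_n -> M, forall b, Stdlib.Lists.List.In b s -> sat phi a b.

(* The binary tree ^{omega>}2 = seq bool, with the initial-segment order. *)
Definition tree_le (eta nu : seq bool) : Prop := prefix eta nu.

Definition antichain (X : seq bool -> Prop) : Prop :=
  forall eta nu, X eta -> X nu -> eta <> nu ->
    ~ tree_le eta nu /\ ~ tree_le nu eta.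

Definition antichain_tree (L : signature) (M : structure L) (n m : nat)
  (phi : formula L) (a : seq bool -> 'I_m -> M) : Prop :=
  forall X : seq bool -> Prop,
    consistent n phi (fun b => exists2 eta, X eta & b = a eta) <-> antichain X.

Definition has_TP2 (L : signature) (M : structure L) (n m : nat)
  (phi : formula L) : Prop :=
  exists b : nat -> nat -> 'I_m -> M,
    (forall i j j', j <> j' ->
       ~ consistent n phi (fun c => c = b i j \/ c = b i j')) /\
    (forall f : nat -> nat,
       consistent n phi (fun c => exists i, c = b i (f i))).

From mathcomp Require Import all_boot.

(* Index the TP2 array by the comb eta_{i,j} = 1^i 0^(j+1): nodes in the same
   row i form a chain, while nodes of different rows split at the shorter run
   of 1s, so a choice of one node per row is an antichain.  Hence in the
   antichain tree each row of parameters is 2-inconsistent and every path is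
   consistent. *)

Definition comb_node (i j : nat) : seq bool := nseq i true ++ nseq j.+1 false.

Lemma size_comb_node i j : size (comb_node i j) = i + j.+1.
Proof. by rewrite size_cat !size_nseq. Qed.

Lemma prefix_comb_node i j l : j <= l -> prefix (comb_node i j) (comb_node i l).
Proof.
move=> le_jl; rewrite prefix_catr // -(subnKC (le_jl : j.+1 <= l.+1)).
by rewrite nseqD eqxx prefix_prefix.
Qed.

Lemma prefix_comb_node_row i j k l :
  prefix (comb_node i j) (comb_node k l) -> i = k.
Proof.
rewrite /comb_node; elim: i k => [|i IHi] [|k] //=.
by move/IHi ->.
Qed.

Lemma comb_row_not_antichain i j j' : j <> j' ->
  ~ antichain (fun eta => eta = comb_node i j \/ eta = comb_node i j').
Proof.
move=> neq_jj' achain.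
have neq_nodes : comb_node i j <> comb_node i j'.
  by move/(congr1 size); rewrite !size_comb_node => /addnI [].
have [not_le not_ge] := achain _ _ (or_introl erefl) (or_intror erefl) neq_nodes.
have [le_jj'|/ltnW le_j'j] := leqP j j'.
- exact/not_le/prefix_comb_node.
- exact/not_ge/prefix_comb_node.
Qed.

Lemma comb_path_antichain (f : nat -> nat) :
  antichain (fun eta => exists i, eta = comb_node i (f i)).
Proof.
move=> _ _ [i ->] [k ->] neq_nodes.
have neq_ik : i <> k by move=> eq_ik; apply: neq_nodes; rewrite eq_ik.
by split=> /prefix_comb_node_row eq_row; apply: neq_ik; rewrite eq_row.
Qed.

Lemma consistent_sub (L : signature) (M : structure L) (n m : nat)
  (phi : formula L) (S1 S2 : ('I_m -> M) -> Prop) :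
  (forall b, S2 b -> S1 b) -> consistent n phi S1 -> consistent n phi S2.
Proof. by move=> sub21 cons1 s s_in2; apply: cons1 => b /s_in2 /sub21. Qed.

Theorem proposition4p6 (L : signature) (M : structure L) (n m : nat)
  (phi : formula L) (Hphi : formula_vars_below (n + m) phi)
  (a : seq bool -> 'I_m -> M) :
  @antichain_tree L M n m phi a -> @has_TP2 L M n m phi.
Proof.
move=> atree; exists (fun i j => a (comb_node i j)); split.
- move=> i j j' neq_jj' cons_row; apply: (comb_row_not_antichain i j j' neq_jj').
  apply/atree; apply: consistent_sub cons_row => _ [eta [->|->] ->];
    [left | right] => //.
- move=> f; have /atree := comb_path_antichain f.
  by apply: consistent_sub => _ [i ->]; exists (comb_node i (f i)) => //; exists i.
Qed.
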